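(* In any execution of the algorithm described in the context, in every round $r>0$ non-faulty processes only sign and broadcast AUX messages whose binary value was proposed by some non-faulty process.
   Context: Model. There are $n$ processes $p_1,\dots,p_n$ ($i$ is the index of $p_i$) communicating over an asynchronous, reliable, point-to-point network: every pair of processes is connected by a channel, message delays are finite but unbounded, and the network does not lose, duplicate, modify or create messages. ''Broadcast'' means sending the message to every process (including oneself). Messages are signed with unforgeable digital signatures ($\langle m\rangle_j$ denotes message $m$ signed by $p_j$); malformed messages or messages with invalid signatures are ignored. Up to $t$ processes are Byzantine (faulty) and may behave arbitrarily and collude, but cannot forge signatures of other processes; the remaining processes are non-faulty and follow the algorithm. It is assumed that $t<n/3$. Each non-faulty process $p_i$ starts with a proposal $v_i\in\{0,1\}$. Algorithm. Messages are of the form $\mathrm{AUX}[r](v)$ with round $r\in\mathbb{N}$ and $v\in\{0,1\}$, sent as a pair $(\langle \mathrm{AUX}[r](v)\rangle_j,\mathit{proofs})$ where $\mathit{proofs}$ is a set of signed AUX messages. The predicate $\mathsf{is\_valid}(r,est,\mathit{proofs})$ is: if $r=0$ return true; if $r=1$ return true iff $\mathit{proofs}$ contains signed $\mathrm{AUX}[0](est)$ messages from $t+1$ different processes; otherwise let $b=(r-1)\bmod 2$; if $est=b$, return true iff ($r=2$ and $\mathit{proofs}$ contains signed $\mathrm{AUX}[0](b)$ from $t+1$ different processes) or ($\mathit{proofs}$ contains signed $\mathrm{AUX}[r-2](b)$ from $n-t$ different processes); if $est\neq b$, return true iff $\mathit{proofs}$ contains signed $\mathrm{AUX}[r-1](\neg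 b)$ from $n-t$ different processes. Each process $p_i$ with proposal $v_i$ keeps a round counter $r_i$, a set $\mathit{aux\_values}_i$ of signed AUX messages, and timers indexed by naturals (timers $2r$ and $2r+1$ belong to round $r$; starting an already started or expired timer does nothing). It sets $r_i:=0$, $\mathit{aux\_values}_i:=\emptyset$, broadcasts $(\langle\mathrm{AUX}[0](v_i)\rangle_i,\emptyset)$, then repeats forever: (1) $r_i:=r_i+1$; (2) if $i=r_i\bmod n$ (coordinator), run Broadcast; (3) start timer $2r_i$ and wait until it expires; (4) if $i\ne r_i\bmod n$, run Broadcast; (5) wait until $\mathit{aux\_values}_i$ contains round-$r_i$ AUX messages from $n-t$ different processes; (6) start timer $2r_i+1$ and wait until it expires; (7) with $b_i=r_i\bmod 2$, if $\mathit{aux\_values}_i$ contains $\mathrm{AUX}[r_i](b_i)$ from $n-t$ different processes, decide $b_i$ (if not yet decided). Broadcast: let $\mathit{values}_i$ be the set of $v\in\{0,1\}$ such that $\mathsf{is\_valid}(r_i,v,S)$ holds for some $S\subseteq\mathit{aux\_values}_i$; let $bv=(r_i+1)\bmod 2$; if $p_i$ received from $p_{r_i\bmod n}$ a message $(\langle\mathrm{AUX}[r_i](p)\rangle_{r_i\bmod n},\cdot)$ with $p\in\mathit{values}_i$ then $est_i:=p$, else if $bv\in\mathit{values}_i$ then $est_i:=bv$, else $est_i:=\neg bv$; choose $\mathit{proofs}\subseteq\mathit{aux\_values}_i$ with $\mathsf{is\_valid}(r_i,est_i,\mathit{proofs})$ and broadcast $(\langle\mathrm{AUX}[r_i](est_i)\rangle_i,\mathit{proofs})$.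 On receiving $(\langle\mathrm{AUX}[r_j](est_j)\rangle_j,\mathit{proofs})$: if $\mathsf{is\_valid}(r_j,est_j,\mathit{proofs})$, add the signed message and the messages of $\mathit{proofs}$ needed to satisfy the predicate to $\mathit{aux\_values}_i$ (such messages are called valid). Then let $\rho_i$ be the largest round for which $\mathit{aux\_values}_i$ contains messages from $t+1$ different processes, and set every timer with index $\le 2\rho_i$ to expired. *)

From mathcomp Require Import all_boot.
Set Implicit Arguments. Unset Strict Implicit. Unset Printing Implicit Defensive.

(* Processes are p_1..p_n, represented by i : 'I_n with index (val i).+1. *)

(* A signed message <AUX[r](v)>_j is the triple (j, (r, v)). *)
Definition sAux (n : nat) := ('I_n * (nat * bool))%type.
Definition mkAux n (j : 'I_n) (r : nat) (v : bool) : sAux n := (j, (r, v)).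
Definition signer n (s : sAux n) : 'I_n := s.1.
Definition srnd n (s : sAux n) : nat := s.2.1.
Definition sbit n (s : sAux n) : bool := s.2.2.

Definition nsig n (S : seq (sAux n)) (r : nat) (b : bool) : nat :=
  size (undup [seq signer s | s <- S & (srnd s == r) && (sbit s == b)]).
Definition nsig_round n (S : seq (sAux n)) (r : nat) : nat :=
  size (undup [seq signer s | s <- S & srnd s == r]).

(* the bit x mod 2 in {0,1} is represented by the boolean odd x *)
Definition is_valid (n t r : nat) (est : bool) (S : seq (sAux n)) : bool :=
  if r == 0 then true
  else if r == 1 then t.+1 <= nsig S 0 est
  else let b := odd r.-1 in
       if est == b then ((r == 2) && (t.+1 <= nsig S 0 b)) || (n - t <= nsig S (r - 2) b)
       else n - t <= nsig S r.-1 (~~ b).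

Definition Msg (n : nat) := ('I_n * 'I_n * sAux n * seq (sAux n))%type.
Definition msender n (m : Msg n) : 'I_n := m.1.1.1.
Definition mdest n (m : Msg n) : 'I_n := m.1.1.2.
Definition mmain n (m : Msg n) : sAux n := m.1.2.
Definition mproofs n (m : Msg n) : seq (sAux n) := m.2.

Inductive tstate := TNot | TRun | TExp.

(* program counter of a non-faulty process:
   PInit  : not yet started
   PB2    : at step (2) (coordinator, about to run Broadcast)
   PT1    : at step (3), waiting for timer 2r
   PB4    : at step (4) (non-coordinator, about to run Broadcast)
   PQ     : at step (5), waiting for n-t round-r AUX messages
   PT2    : at step (6), waiting for timer 2r+1 *)
Inductive phase := PInit | PB2 | PT1 | PB4 | PQ | PT2.

Record lstate (n : nat) := LS {
  pc : phase;
  rnd : nat;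
  aux : seq (sAux n);
  inbox : seq (Msg n);
  timers : nat -> tstate;
  dec : option bool }.

Record gstate (n : nat) := GS {
  loc : 'I_n -> lstate n;       (* local states (meaningful for non-faulty) *)
  sent : seq (Msg n);
  delivered : seq nat }.        (* indices in [sent] of delivered messages *)

Definition upd n (f : 'I_n -> lstate n) (i : 'I_n) (x : lstate n) :=
  fun j => if j == i then x else f j.

Definition is_coord n (i : 'I_n) (r : nat) : bool := (val i).+1 == r %% n.

Definition start_timer (tm : nat -> tstate) (k : nat) : nat -> tstate :=
  fun k' => if (k' == k) && (if tm k is TNot then true else false) then TRun else tm k'.

(* set every timer with index <= 2 rho to expired, rho being the largest
   round for which A contains messages from t+1 different processes *)
Definition expire n (t : nat) (A : seq (sAux n)) (tm : nat -> tstate) : nat -> tstate :=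
  fun k => if has (fun s => (k <= 2 * srnd s) && (t.+1 <= nsig_round A (srnd s))) A
           then TExp else tm k.

Definition bcast n (i : 'I_n) (s : sAux n) (P : seq (sAux n)) : seq (Msg n) :=
  [seq (i, d, s, P) | d <- enum 'I_n].

Definition values n t (st : lstate n) (v : bool) : Prop :=
  exists S, all (fun s => s \in aux st) S /\ is_valid t (rnd st) v S.

Definition coord_msg n (st : lstate n) (p : bool) : Prop :=
  exists m, m \in inbox st /\ is_coord (msender m) (rnd st) /\
    signer (mmain m) = msender m /\ srnd (mmain m) = rnd st /\ sbit (mmain m) = p.

Definition est_choice n t (st : lstate n) (est : bool) : Prop :=
  let bv := odd (rnd st).+1 in
  (coord_msg st est /\ values t st est) \/
  ((~ exists p, coord_msg st p /\ values t st p) /\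
   (values t st bv -> est = bv) /\ (~ values t st bv -> est = ~~ bv)).

Definition enter_round n (i : 'I_n) (st : lstate n) (r : nat) : lstate n :=
  if is_coord i r then LS PB2 r (aux st) (inbox st) (timers st) (dec st)
  else LS PT1 r (aux st) (inbox st) (start_timer (timers st) (2 * r)) (dec st).

(* the adversary knows a signed message if it occurs in a message delivered
   to some faulty process *)
Definition known n (F : {set 'I_n}) (g : gstate n) (s : sAux n) : Prop :=
  exists k m, k \in delivered g /\ onth (sent g) k = Some m /\
    mdest m \in F /\ s \in mmain m :: mproofs m.

Inductive step (n t : nat) (F : {set 'I_n}) (v : 'I_n -> bool) :
    gstate n -> gstate n -> Prop :=
| s_start g i : i \notin F -> pc (loc g i) = PInit ->
    let st := loc g i in
    step t F v g
      (GS (upd (loc g) i (enter_round i (LS PInit 0 [::] (inbox st) (timers st) (dec st)) 1))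
          (sent g ++ bcast i (mkAux i 0 (v i)) [::]) (delivered g))
| s_b2 g i est P : i \notin F -> pc (loc g i) = PB2 ->
    let st := loc g i in
    est_choice t st est -> all (fun s => s \in aux st) P -> is_valid t (rnd st) est P ->
    step t F v g
      (GS (upd (loc g) i (LS PT1 (rnd st) (aux st) (inbox st)
                            (start_timer (timers st) (2 * rnd st)) (dec st)))
          (sent g ++ bcast i (mkAux i (rnd st) est) P) (delivered g))
| s_t1 g i : i \notin F -> pc (loc g i) = PT1 ->
    let st := loc g i in
    timers st (2 * rnd st) = TExp ->
    step t F v g
      (GS (upd (loc g) i (LS (if is_coord i (rnd st) then PQ else PB4) (rnd st) (aux st)
                            (inbox st) (timers st) (dec st)))
          (sent g) (delivered g))
| s_b4 g i est P : i \notin F -> pc (loc g i) = PB4 ->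
    let st := loc g i in
    est_choice t st est -> all (fun s => s \in aux st) P -> is_valid t (rnd st) est P ->
    step t F v g
      (GS (upd (loc g) i (LS PQ (rnd st) (aux st) (inbox st) (timers st) (dec st)))
          (sent g ++ bcast i (mkAux i (rnd st) est) P) (delivered g))
| s_q g i : i \notin F -> pc (loc g i) = PQ ->
    let st := loc g i in
    n - t <= nsig_round (aux st) (rnd st) ->
    step t F v g
      (GS (upd (loc g) i (LS PT2 (rnd st) (aux st) (inbox st)
                            (start_timer (timers st) (2 * rnd st).+1) (dec st)))
          (sent g) (delivered g))
| s_t2 g i : i \notin F -> pc (loc g i) = PT2 ->
    let st := loc g i in
    timers st (2 * rnd st).+1 = TExp ->
    let b := odd (rnd st) in
    let d := if (if dec st is None then true else false) && (n - t <= nsig (aux st) (rnd st) b)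
             then Some b else dec st in
    step t F v g
      (GS (upd (loc g) i (enter_round i (LS PT2 (rnd st) (aux st) (inbox st) (timers st) d)
                                        (rnd st).+1))
          (sent g) (delivered g))
| s_timer g i k : i \notin F -> timers (loc g i) k = TRun ->
    let st := loc g i in
    step t F v g
      (GS (upd (loc g) i (LS (pc st) (rnd st) (aux st) (inbox st)
                            (fun k' => if k' == k then TExp else timers st k') (dec st)))
          (sent g) (delivered g))
| s_recv_valid g k m S : onth (sent g) k = Some m -> k \notin delivered g ->
    mdest m \notin F -> pc (loc g (mdest m)) <> PInit ->
    is_valid t (srnd (mmain m)) (sbit (mmain m)) (mproofs m) ->
    all (fun s => s \in mproofs m) S ->
    is_valid t (srnd (mmain m)) (sbit (mmain m)) S ->
    let st := loc g (mdest m) in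
    let A := aux st ++ mmain m :: S in
    step t F v g
      (GS (upd (loc g) (mdest m) (LS (pc st) (rnd st) A (m :: inbox st)
                                     (expire t A (timers st)) (dec st)))
          (sent g) (k :: delivered g))
| s_recv_invalid g k m : onth (sent g) k = Some m -> k \notin delivered g ->
    mdest m \notin F -> pc (loc g (mdest m)) <> PInit ->
    ~~ is_valid t (srnd (mmain m)) (sbit (mmain m)) (mproofs m) ->
    let st := loc g (mdest m) in
    step t F v g
      (GS (upd (loc g) (mdest m) (LS (pc st) (rnd st) (aux st) (m :: inbox st)
                                     (expire t (aux st) (timers st)) (dec st)))
          (sent g) (k :: delivered g))
| s_recv_faulty g k m : onth (sent g) k = Some m -> k \notin delivered g ->
    mdest m \in F ->
    step t F v g (GS (loc g) (sent g) (k :: delivered g))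
| s_byz g j d s P : j \in F ->
    (forall s', s' \in s :: P -> signer s' \in F \/ known F g s') ->
    step t F v g (GS (loc g) (sent g ++ [:: (j, d, s, P)]) (delivered g)).

Definition init_gstate (n : nat) : gstate n :=
  GS (fun _ => LS PInit 0 [::] [::] (fun _ => TNot) None) [::] [::].

Inductive reachable (n t : nat) (F : {set 'I_n}) (v : 'I_n -> bool) : gstate n -> Prop :=
| r_init : reachable t F v (init_gstate n)
| r_step g g' : reachable t F v g -> step t F v g g' -> reachable t F v g'.

From mathcomp Require Import all_boot.
From mathcomp Require Import zify.
Set Implicit Arguments. Unset Strict Implicit. Unset Printing Implicit Defensive.

(* The proof is an invariant of the execution: every signed AUX message that
   occurs in a sent message or in some aux_values set, and whose signer is
   non-faulty, carries a value proposed by a non-faulty process.  A non-faulty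
   process signs either its proposal (round 0) or, in a round r > 0, a value
   est with a proof that is_valid; every threshold in is_valid (t+1 or n-t
   distinct signers) exceeds the number of faulty processes, so one of the
   proof's messages has a non-faulty signer and the same value, and the
   invariant passes to est.  Faulty processes cannot forge signatures, so
   whatever they send that is signed by a non-faulty process was already sent.
   The invariant holds in round 0 as well. *)

Section Honesty.

Variables (n t : nat) (F : {set 'I_n}) (v : 'I_n -> bool).

Definition proposed (b : bool) : Prop := exists2 j : 'I_n, j \notin F & v j = b.

Definition honest_sig (s : sAux n) : Prop := signer s \notin F -> proposed (sbit s).

Definition msg_honest (m : Msg n) : Prop := {in mmain m :: mproofs m, forall s, honest_sig s}.

Definition msgs_honest (ms : seq (Msg n)) : Prop := {in ms, forall m, msg_honest m}.

(* The round bound matters because is_valid accepts any proof in round 0. *)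
Definition lstate_ok (st : lstate n) : Prop :=
  {in aux st, forall s, honest_sig s} /\ (pc st <> PInit -> 0 < rnd st).

Definition honest_inv (g : gstate n) : Prop :=
  msgs_honest (sent g) /\ forall i, lstate_ok (loc g i).

Lemma nsig_signer_notin (P : seq (sAux n)) r b : #|F| < nsig P r b ->
  exists2 s, s \in P & [/\ srnd s = r, sbit s = b & signer s \notin F].
Proof.
rewrite ltnNge => nsig_gt.
case: (boolP (has (fun s => [&& srnd s == r, sbit s == b & signer s \notin F]) P)).
  by case/hasP=> s sP /and3P[/eqP rs /eqP bs sF]; exists s.
move/hasPn=> noneP; case/negP: nsig_gt.
rewrite /nsig cardE; apply: uniq_leq_size (undup_uniq _) _ => x.
rewrite mem_undup => /mapP[s]; rewrite mem_filter => /andP[/andP[rs bs] sP] ->.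
by move: (noneP s sP); rewrite rs bs mem_enum /= negbK.
Qed.

Lemma valid_proposed r est (P : seq (sAux n)) :
  2 * t < n -> #|F| <= t -> 0 < r -> is_valid t r est P ->
  {in P, forall s, honest_sig s} -> proposed est.
Proof.
move=> tn Ft r_gt0 est_valid P_honest.
have above_F r' b : #|F| < nsig P r' b -> proposed b.
  by case/nsig_signer_notin=> s sP [_ <- sF]; apply: P_honest.
have t1_gt_F k : t.+1 <= k -> #|F| < k by move=> ?; lia.
have nt_gt_F k : n - t <= k -> #|F| < k by move=> ?; lia.
move: est_valid; rewrite /is_valid; case: r r_gt0 => [//|[|r]] _ /=.
  by move/t1_gt_F/above_F.
case: eqP => [-> /orP[/andP[_ /t1_gt_F/above_F] | /nt_gt_F/above_F] //|est_b].
by move/nt_gt_F/above_F; case: est est_b; case: (odd r).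
Qed.

Lemma msgs_honest_cat ms1 ms2 :
  msgs_honest ms1 -> msgs_honest ms2 -> msgs_honest (ms1 ++ ms2).
Proof. by move=> h1 h2 m; rewrite mem_cat => /orP[/h1|/h2]. Qed.

Lemma msgs_honest_bcast (i : 'I_n) s P :
  honest_sig s -> {in P, forall s', honest_sig s'} -> msgs_honest (bcast i s P).
Proof. by move=> hs hP _ /mapP[d _ ->] s'; rewrite inE => /predU1P[->|/hP]. Qed.

Lemma own_bcast_honest (i : 'I_n) (st : lstate n) est P :
  2 * t < n -> #|F| <= t -> i \notin F -> lstate_ok st -> pc st <> PInit ->
  all (mem (aux st)) P -> is_valid t (rnd st) est P ->
  msgs_honest (bcast i (mkAux i (rnd st) est) P).
Proof.
move=> tn Ft iF [aux_honest rnd_gt0] started /allP P_aux est_valid.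
have P_honest : {in P, forall s, honest_sig s} by move=> s /P_aux /aux_honest.
apply: (msgs_honest_bcast _ P_honest) => _.
exact: valid_proposed tn Ft (rnd_gt0 started) est_valid P_honest.
Qed.

Lemma lstate_ok_upd {f : 'I_n -> lstate n} {i x} :
  (forall j, lstate_ok (f j)) -> lstate_ok x -> forall j, lstate_ok (upd f i x j).
Proof. by move=> hf hx j; rewrite /upd; case: eqP. Qed.

Lemma lstate_ok_enter_round {i : 'I_n} {st r} :
  {in aux st, forall s, honest_sig s} -> 0 < r -> lstate_ok (enter_round i st r).
Proof. by rewrite /enter_round; case: ifP. Qed.

Lemma lstate_ok_progress {st : lstate n} {p ib tm d} :
  lstate_ok st -> pc st <> PInit -> lstate_ok (LS p (rnd st) (aux st) ib tm d).
Proof. by move=> [aux_h rnd_h] started; split=> // _; apply: rnd_h. Qed.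

Lemma honest_inv_init : honest_inv (init_gstate n).
Proof. by split. Qed.

Lemma honest_inv_step g g' :
  2 * t < n -> #|F| <= t -> step t F v g g' -> honest_inv g -> honest_inv g'.
Proof.
move=> tn Ft []; clear g g'.
- move=> g i iF _ st [sent_h loc_h]; split=> /=.
    apply: msgs_honest_cat sent_h (msgs_honest_bcast _ _) => // _.
    by exists i.
  exact: lstate_ok_upd loc_h (lstate_ok_enter_round _ _).
- move=> g i est P iF pc_i st _ P_aux est_valid [sent_h loc_h].
  have started : pc st <> PInit by rewrite /st pc_i.
  split=> /=; last exact: lstate_ok_upd loc_h (lstate_ok_progress (loc_h i) started).
  exact: msgs_honest_cat sent_h (own_bcast_honest tn Ft iF (loc_h i) started P_aux est_valid).
- move=> g i iF pc_i st _ [sent_h loc_h].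
  have started : pc st <> PInit by rewrite /st pc_i.
  split=> //=; exact: lstate_ok_upd loc_h (lstate_ok_progress (loc_h i) started).
- move=> g i est P iF pc_i st _ P_aux est_valid [sent_h loc_h].
  have started : pc st <> PInit by rewrite /st pc_i.
  split=> /=; last exact: lstate_ok_upd loc_h (lstate_ok_progress (loc_h i) started).
  exact: msgs_honest_cat sent_h (own_bcast_honest tn Ft iF (loc_h i) started P_aux est_valid).
- move=> g i iF pc_i st _ [sent_h loc_h].
  have started : pc st <> PInit by rewrite /st pc_i.
  split=> //=; exact: lstate_ok_upd loc_h (lstate_ok_progress (loc_h i) started).
- move=> g i iF _ st _ b d [sent_h loc_h]; split=> //=.
  by apply: lstate_ok_upd (lstate_ok_enter_round _ _) => //; case: (loc_h i).
- move=> g i k iF _ st [sent_h loc_h]; split=> //=.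
  by apply: lstate_ok_upd; case: (loc_h i).
- move=> g k m S m_k _ _ _ _ /allP S_proofs _ st A [sent_h loc_h]; split=> //=.
  have m_h : msg_honest m by apply: sent_h; apply/onthP; exists k.
  apply: lstate_ok_upd => //; case: (loc_h (mdest m)) => aux_h rnd_h; split=> //= s.
  rewrite mem_cat inE => /or3P[/aux_h //|/eqP->|/S_proofs sm].
    exact: (m_h _ (mem_head _ _)).
  by apply: (m_h s); rewrite inE sm orbT.
- move=> g k m _ _ _ _ _ st [sent_h loc_h]; split=> //=.
  by apply: lstate_ok_upd; case: (loc_h (mdest m)).
- by move=> g k m _ _ _ [sent_h loc_h]; split.
- move=> g j d s P _ forged [sent_h loc_h]; split=> //=.
  apply: (msgs_honest_cat sent_h) => m'; rewrite inE => /eqP-> s' s'_in.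
  case: (forged s' s'_in) => [s'F /negP //|[k [m [_ [m_k [_ s'_m]]]]]].
  have m_h : msg_honest m by apply: sent_h; apply/onthP; exists k.
  exact: (m_h _ s'_m).
Qed.

Lemma reachable_honest_inv g :
  2 * t < n -> #|F| <= t -> reachable t F v g -> honest_inv g.
Proof.
move=> tn Ft; elim=> [|g0 g1 _ inv_g0 g0g1]; first exact: honest_inv_init.
exact: honest_inv_step g0g1 inv_g0.
Qed.

End Honesty.

Theorem lemma2 (n t : nat) (F : {set 'I_n}) (v : 'I_n -> bool) (g : gstate n) :
  3 * t < n -> #|F| <= t -> reachable t F v g ->
  forall (m : Msg n) (s : sAux n),
    m \in sent g -> s \in mmain m :: mproofs m ->
    signer s \notin F -> 0 < srnd s ->
    exists2 j : 'I_n, j \notin F & v j = sbit s.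
Proof.
move=> tn Ft g_reach m s m_sent s_m sF _.
have tn2 : 2 * t < n by lia.
have [sent_h _] := reachable_honest_inv tn2 Ft g_reach.
exact: sent_h m_sent s s_m sF.
Qed.
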